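(* Let $L>0$. There is no function $\theta\in C^3([-L,L])$, $\theta\not\equiv0$, solving the third-order ODE $$\tfrac13\,\theta=\theta^{3}\bigl(\theta'''+\theta\bigr)\quad\text{on }(-L,L)$$ with $\theta(-L)=\theta(L)=0$.
   Context: This is the profile equation for separable blow-up solutions $u=(T-t)^{-1/3}\theta(x)$ of the nonlinear dispersion equation $u_t=u^3(u_{xxx}+u)$. For a non-vanishing solution one has the identity $-\tfrac{1}{3\theta}=\theta'\theta''-\int(\theta'')^2\,dx+\tfrac12\theta^2$ (up to an additive constant), where $\int(\theta'')^2dx$ denotes an antiderivative. *)

From Stdlib Require Import Reals.
Open Scope R_scope.

Definition cont_on_closed (f : R -> R) (a b : R) : Prop :=
  forall x, a <= x <= b -> limit1_in f (fun y => a <= y <= b) (f x) x.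

(* solves_profile f a b: f is C^3 on [a,b] -- three times differentiable on
   (a,b) with derivatives f1,f2,f3, and f,f1,f2,f3 extend continuously to
   [a,b] -- and f solves (1/3) f = f^3 (f''' + f) on (a,b). *)
Definition solves_profile (f : R -> R) (a b : R) : Prop :=
  exists f1 f2 f3 : R -> R,
    (forall x, a < x < b ->
       derivable_pt_lim f x (f1 x) /\
       derivable_pt_lim f1 x (f2 x) /\
       derivable_pt_lim f2 x (f3 x)) /\
    cont_on_closed f a b /\ cont_on_closed f1 a b /\
    cont_on_closed f2 a b /\ cont_on_closed f3 a b /\
    (forall x, a < x < b -> / 3 * f x = (f x) ^ 3 * (f3 x + f x)).

From Stdlib Require Import Reals Lra Psatz.
Open Scope R_scope.

(* Dividing the profile equation by theta shows that
   wherever theta does not vanish, theta^2 (theta''' + theta) = 1/3; hence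
   theta cannot be nonzero and small at a point where theta''' is bounded
   (lemma [profile_no_small_nonzero_value]).  Given a nonzero value theta(x0)
   and the boundary zero theta(-L) = 0, take c = the last zero of theta to the
   left of x0 ([last_zero_before]).  Points y slightly to the right of c
   satisfy theta(y) <> 0, while by continuity of theta and of theta''' on the
   closed interval, theta(y) is as small as we like and theta'''(y) stays
   close to theta'''(c) ([right_points_close]).  This contradicts the first
   observation. *)

Lemma cont_on_closed_eps (f : R -> R) (a b x : R) :
  cont_on_closed f a b -> a <= x <= b ->
  forall e, 0 < e -> exists d, 0 < d /\
    forall y, a <= y <= b -> Rabs (y - x) < d -> Rabs (f y - f x) < e.
Proof.
  intros Hf Hx e He.
  destruct (Hf x Hx e He) as [d [Hd Hclose]].
  exists d; split; [exact Hd |].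
  intros y Hy Hyx; exact (Hclose y (conj Hy Hyx)).
Qed.

(* A continuous function vanishing at a but not at x0 has a last zero c in
   [a, x0): f c = 0 and f has no zero in (c, x0].  c is the supremum of the
   zeros of f in [a, x0]; it is itself a zero by continuity. *)
Lemma last_zero_before (f : R -> R) (a b x0 : R) :
  cont_on_closed f a b -> a <= x0 <= b -> f a = 0 -> f x0 <> 0 ->
  exists c, a <= c < x0 /\ f c = 0 /\ forall y, c < y <= x0 -> f y <> 0.
Proof.
  intros Hf Hx0 Ha Hx0nz.
  set (Z := fun y => a <= y <= x0 /\ f y = 0).
  assert (HZb : bound Z) by (exists x0; intros y [Hy _]; lra).
  assert (HZne : exists y, Z y) by (exists a; split; [lra | exact Ha]).
  destruct (completeness Z HZb HZne) as [c [Hub Hlub]].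
  assert (Hac : a <= c) by (apply Hub; split; [lra | exact Ha]).
  assert (Hcx0 : c <= x0) by (apply Hlub; intros y [Hy _]; lra).
  assert (Hc : f c = 0).
  { destruct (Req_dec (f c) 0) as [Hz | Hnz]; [exact Hz | exfalso].
    (* Near c, f stays away from 0, so c - d would already bound Z. *)
    destruct (cont_on_closed_eps f a b c Hf ltac:(lra) (Rabs (f c))
                (Rabs_pos_lt _ Hnz)) as [d [Hd Hclose]].
    assert (Hbound : is_upper_bound Z (c - d)).
    { intros y [Hy Hfy].
      destruct (Rle_dec y (c - d)) as [Hle | Hgt]; [exact Hle | exfalso].
      assert (y <= c) by (apply Hub; split; assumption).
      assert (Hyc : Rabs (f y - f c) < Rabs (f c))
        by (apply Hclose; [lra | rewrite Rabs_left1; lra]).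
      rewrite Hfy, Rminus_0_l, Rabs_Ropp in Hyc; lra. }
    pose proof (Hlub (c - d) Hbound); lra. }
  assert (Hlt : c < x0)
    by (destruct (Req_dec c x0) as [Heq | Hne]; [subst; contradiction | lra]).
  exists c; split; [lra | split; [exact Hc |]].
  intros y Hy Hfy.
  assert (y <= c) by (apply Hub; split; [lra | exact Hfy]). lra.
Qed.

Lemma right_points_close (g h : R -> R) (a b c x0 : R) :
  cont_on_closed g a b -> cont_on_closed h a b -> a <= c -> c < x0 <= b ->
  forall eg eh, 0 < eg -> 0 < eh ->
  exists y, c < y < x0 /\ Rabs (g y - g c) < eg /\ Rabs (h y - h c) < eh.
Proof.
  intros Hg Hh Hac Hx0 eg eh Heg Heh.
  destruct (cont_on_closed_eps g a b c Hg ltac:(lra) eg Heg) as [dg [Hdg Hgc]].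
  destruct (cont_on_closed_eps h a b c Hh ltac:(lra) eh Heh) as [dh [Hdh Hhc]].
  set (r := Rmin dg (Rmin dh (x0 - c))).
  assert (Hr : 0 < r /\ r <= dg /\ r <= dh /\ r <= x0 - c).
  { unfold r; repeat split.
    - repeat apply Rmin_glb_lt; lra.
    - apply Rmin_l.
    - eapply Rle_trans; [apply Rmin_r | apply Rmin_l].
    - eapply Rle_trans; [apply Rmin_r | apply Rmin_r]. }
  exists (c + r / 2).
  assert (Hdist : Rabs (c + r / 2 - c) = r / 2) by (rewrite Rabs_right; lra).
  repeat split; try lra.
  - apply Hgc; [lra | rewrite Hdist; lra].
  - apply Hhc; [lra | rewrite Hdist; lra].
Qed.

(* At a point where theta = t <> 0 and theta''' = s with |s| < M, the profile
   equation t/3 = t^3 (s + t), i.e. 1/3 = t^2 (s + t), forces |t| to be at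
   least 1/(3(M+1)). *)
Lemma profile_no_small_nonzero_value (M t s : R) :
  0 < M -> Rabs s < M -> Rabs t < / (3 * (M + 1)) -> t <> 0 ->
  / 3 * t <> t ^ 3 * (s + t).
Proof.
  intros HM Hs Ht Ht0 Heq.
  set (eps := / (3 * (M + 1))) in Ht.
  assert (Heps : eps * (3 * (M + 1)) = 1) by (unfold eps; field; lra).
  assert (Hthird : / 3 = t ^ 2 * (s + t)).
  { apply (Rmult_eq_reg_l t); [| exact Ht0].
    rewrite (Rmult_comm t (/ 3)), Heq; ring. }
  assert (Habs : Rabs (s + t) <= M + 1) by
    (pose proof (Rabs_triang s t); assert (eps <= 1) by nra; lra).
  assert (Ht2 : t ^ 2 <= eps ^ 2).
  { rewrite <- (pow2_abs t). apply pow_incr; split; [apply Rabs_pos | lra]. }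
  assert (Hprod : / 3 <= eps ^ 2 * (M + 1)).
  { rewrite Hthird, <- (Rabs_right (t ^ 2 * (s + t))) by
      (rewrite <- Hthird; lra).
    rewrite Rabs_mult, (Rabs_right (t ^ 2)) by (apply Rle_ge, pow2_ge_0).
    apply Rmult_le_compat; auto using pow2_ge_0, Rabs_pos. }
  assert (eps <= 1 / 3) by nra.
  nra.
Qed.

Theorem mainTheorem3 (L : R) (HL : 0 < L) :
  ~ exists theta : R -> R,
      solves_profile theta (- L) L /\
      (exists x, - L <= x <= L /\ theta x <> 0) /\
      theta (- L) = 0 /\ theta L = 0.
Proof.
  intros [th [[f1 [f2 [f3 [_ [Hc0 [_ [_ [Hc3 Heq]]]]]]]]
               [[x0 [Hx0 Hnz]] [Hleft _]]]].
  destruct (last_zero_before th (- L) L x0 Hc0 Hx0 Hleft Hnz)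
    as [c [Hc [Hthc Hnozero]]].
  set (M := Rabs (f3 c) + 1).
  assert (HM : 0 < M) by (unfold M; pose proof (Rabs_pos (f3 c)); lra).
  destruct (right_points_close th f3 (- L) L c x0 Hc0 Hc3 ltac:(lra) ltac:(lra)
              (/ (3 * (M + 1))) 1 ltac:(apply Rinv_0_lt_compat; lra) Rlt_0_1)
    as [y [Hy [Hthy Hf3y]]].
  rewrite Hthc, Rminus_0_r in Hthy.
  assert (Hf3 : Rabs (f3 y) < M)
    by (unfold M; pose proof (Rabs_triang_inv (f3 y) (f3 c)); lra).
  apply (profile_no_small_nonzero_value M (th y) (f3 y) HM Hf3 Hthy).
  - apply Hnozero; lra.
  - apply Heq; lra.
Qed.
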